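(* For every $\lambda\in H$, where $H=\{\lambda\in B_{1/\sqrt2}(0):\ \mathrm{Re}(\lambda)>0,\ \mathrm{Im}(\lambda)>0\}\setminus B_{2/3}(1/3)$, we have $B_{1/2}(0)\subset A_\lambda\{-1,0,1\}$.
   Context: $B_r(z_0)$ is the open disc of radius $r$ centered at $z_0$. For $\lambda\in\mathbb C$ with $|\lambda|<1$, $A_\lambda\{-1,0,1\}=\{\sum_{n\ge0}a_n\lambda^n: a_n\in\{-1,0,1\}\}$, the attractor of the iterated function system $\{\lambda z-1,\lambda z,\lambda z+1\}$. *)

From Stdlib Require Import Reals.
From Coquelicot Require Import Coquelicot.
From Coquelicot Require Complex.

Open Scope R_scope.

Definition Cx := Complex.C.

Definition open_disc (z0 : Cx) (r : R) (z : Cx) : Prop :=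
  Complex.Cmod (Complex.Cminus z z0) < r.

Definition attractor (lam : Cx) (z : Cx) : Prop :=
  exists a : nat -> Z,
    (forall n, (a n = -1 \/ a n = 0 \/ a n = 1)%Z) /\
    is_series (fun n => Complex.Cmult (Complex.RtoC (IZR (a n))) (Complex.Cpow lam n)) z.

Definition regionH (lam : Cx) : Prop :=
  open_disc (Complex.RtoC 0) (1 / sqrt 2) lam /\
  0 < Complex.Re lam /\ 0 < Complex.Im lam /\
  ~ open_disc (Complex.RtoC (1/3)) (2/3) lam.

From Stdlib Require Import Reals Lra Psatz.
From Coquelicot Require Import Coquelicot.
Open Scope R_scope.

(* Write lam = u + i v and represent points in the real basis (1, lam), z = x + y lam.
   Subtracting the digit a in {-1, 0, 1} nearest to x and dividing by lam maps the
   coordinates to x' = 2 u (x - a) / |lam|^2 + y and y' = - (x - a) / |lam|^2, so the box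
   |x| <= 3/2, |y| <= 1 / (2 |lam|^2) is invariant: |x'| <= (2 u + 1) / (2 |lam|^2) <= 3/2
   precisely because lam lies outside B_{2/3}(1/3), i.e. 2 u + 1 <= 3 |lam|^2.  On H one has
   |lam|^2 <= v, which puts B_{1/2}(0) inside the box, and since the iterates stay bounded
   and |lam| < 1 the remainders lam^(n+1) z_(n+1) of the digit expansion tend to 0. *)

Lemma Cmod_lt_iff_sqr (w : C) (r : R) :
  0 <= r -> Cmod w < r <-> Re w ^ 2 + Im w ^ 2 < r ^ 2.
Proof.
  intros Hr; rewrite <- Cmod2_alt; pose proof (Cmod_ge_0 w).
  split; intros Hlt; nra.
Qed.

Lemma sum_n_remainder_expansion (lam : C) (a w : nat -> C) :
  (forall n, w n = a n + lam * w (S n))%C ->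
  forall N, sum_n (fun n => a n * lam ^ n)%C N = (w O - lam ^ S N * w (S N))%C.
Proof.
  intros Hw N; induction N as [|N IH].
  - rewrite sum_O, (Hw O); simpl; ring.
  - rewrite sum_Sn, IH, (Hw (S N)).
    change (plus ?x ?y) with (Cplus x y); simpl; ring.
Qed.

Lemma is_series_of_bounded_remainders (lam : C) (a w : nat -> C) (M : R) :
  Cmod lam < 1 -> (forall n, Cmod (w n) <= M) ->
  (forall n, w n = a n + lam * w (S n))%C ->
  is_series (fun n => a n * lam ^ n)%C (w O).
Proof.
  intros Hlam HM Hw.
  assert (M_ge0 : 0 <= M) by (pose proof (Cmod_ge_0 (w O)); pose proof (HM O); lra).
  apply filterlim_locally_ball_norm; intros eps.
  assert (Heps : 0 < eps / (M + 1)) by (apply Rdiv_lt_0_compat; [apply cond_pos | lra]).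
  assert (Hlam' : Rabs (Cmod lam) < 1) by (rewrite Rabs_pos_eq; [lra | apply Cmod_ge_0]).
  destruct (pow_lt_1_zero _ Hlam' _ Heps) as [N HN].
  exists N; intros n Hn; unfold ball_norm.
  rewrite (sum_n_remainder_expansion _ _ _ Hw).
  change (norm (minus ?x ?y)) with (Cmod (Cminus x y)).
  replace (Cminus _ _) with (Copp (lam ^ S n * w (S n)))%C by ring.
  rewrite Cmod_opp, Cmod_mult, Cmod_pow.
  specialize (HN (S n) ltac:(lia)).
  rewrite Rabs_pos_eq in HN by (apply pow_le, Cmod_ge_0).
  pose proof (HM (S n)); pose proof (Cmod_ge_0 (w (S n))); pose proof (cond_pos eps).
  assert (eps / (M + 1) * (M + 1) = eps) by (field; lra).
  nra.
Qed.

Definition nearest_digit (x : R) : Z :=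
  if Rlt_dec x (-1/2) then (-1)%Z else if Rle_dec x (1/2) then 0%Z else 1%Z.

Lemma nearest_digit_values (x : R) :
  (nearest_digit x = -1 \/ nearest_digit x = 0 \/ nearest_digit x = 1)%Z.
Proof.
  unfold nearest_digit.
  destruct (Rlt_dec _ _); [|destruct (Rle_dec _ _)]; auto.
Qed.

Lemma nearest_digit_close (x : R) :
  -3/2 <= x <= 3/2 -> -1/2 <= x - IZR (nearest_digit x) <= 1/2.
Proof.
  unfold nearest_digit.
  destruct (Rlt_dec _ _); [|destruct (Rle_dec _ _)]; simpl; lra.
Qed.

Section NearestDigitExpansion.

Variables u v : R.
Let lam : C := (u, v).
Let r2 := u ^ 2 + v ^ 2.

Definition of_coords (p : R * R) : C := (fst p + snd p * lam)%C.

Definition coords (z : C) : R * R := (Re z - u * Im z / v, Im z / v).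

(* The map [w |-> (w - a) / lam] in coordinates, using [/ lam = (2 u - lam) / r2]. *)
Definition digit_step (p : R * R) : R * R :=
  let e := fst p - IZR (nearest_digit (fst p)) in
  (2 * u * e / r2 + snd p, - e / r2).

Definition in_box (p : R * R) : Prop :=
  -3/2 <= fst p <= 3/2 /\ -1 <= 2 * r2 * snd p <= 1.

Lemma of_coords_coords (z : C) : v <> 0 -> of_coords (coords z) = z.
Proof.
  intros Hv; destruct z as [x y].
  unfold of_coords, coords, lam, Cplus, Cmult, RtoC; simpl.
  f_equal; field; auto.
Qed.

Lemma of_coords_digit_step (p : R * R) : r2 <> 0 ->
  of_coords p = (IZR (nearest_digit (fst p)) + lam * of_coords (digit_step p))%C.
Proof.
  intros Hr; destruct p as [x y].
  unfold of_coords, digit_step, lam, Cplus, Cmult, RtoC; simpl.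
  unfold r2 in *; f_equal; field; auto.
Qed.

Hypothesis u_pos : 0 < u.
Hypothesis outside_disc : 2 * u + 1 <= 3 * r2.

Let r2_ge_third : 1/3 <= r2.
Proof. lra. Qed.

Lemma digit_step_in_box (p : R * R) : in_box p -> in_box (digit_step p).
Proof.
  destruct p as [x y]; unfold in_box, digit_step; simpl; intros [Hx Hy].
  pose proof (nearest_digit_close x Hx) as He.
  set (e := x - IZR (nearest_digit x)) in *.
  pose proof r2_ge_third.
  replace (2 * r2 * (- e / r2)) with (- 2 * e) by (field; lra).
  split; [|lra].
  assert (Hmul : r2 * (2 * u * e / r2 + y) = 2 * u * e + r2 * y) by (field; lra).
  assert (Hbound : - (3/2 * r2) <= r2 * (2 * u * e / r2 + y) <= 3/2 * r2) by
    (rewrite Hmul; split; nra).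
  split; nra.
Qed.

Lemma Cmod_of_coords_le (p : R * R) : in_box p -> Cmod (of_coords p) <= 3/2 + 3/2 * Cmod lam.
Proof.
  destruct p as [x y]; unfold in_box, of_coords; simpl; intros [Hx Hy].
  pose proof r2_ge_third.
  assert (Hy' : Rabs y <= 3/2) by (apply Rabs_le; split; nra).
  assert (Hx' : Rabs x <= 3/2) by (apply Rabs_le; lra).
  eapply Rle_trans; [apply Cmod_triangle|].
  rewrite Cmod_mult, !Cmod_R.
  pose proof (Cmod_ge_0 lam); nra.
Qed.

Lemma coords_in_box (z : C) : r2 <= v -> u <= v -> Cmod z < 1/2 -> in_box (coords z).
Proof.
  intros Hv Huv Hz; apply Cmod_lt_iff_sqr in Hz; [|lra].
  destruct z as [x y]; unfold in_box, coords; simpl in *.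
  pose proof r2_ge_third.
  assert (Hx : -1/2 < x < 1/2) by nra.
  assert (Hy : -1/2 < y < 1/2) by nra.
  assert (Hratio : forall a, 0 <= a <= v -> 0 <= a / v <= 1).
  { intros a Ha; split; [apply Rdiv_le_0_compat; lra|].
    apply Rmult_le_reg_r with v; [lra|].
    unfold Rdiv; rewrite Rmult_assoc, Rinv_l; lra. }
  pose proof (Hratio u ltac:(lra)); pose proof (Hratio r2 ltac:(lra)).
  replace (u * y / v) with (u / v * y) by (field; lra).
  replace (2 * r2 * (y / v)) with (2 * (r2 / v) * y) by (field; lra).
  split; split; nra.
Qed.

Theorem attractor_of_nearest_digits (z : C) :
  Cmod lam < 1 -> r2 <= v -> u <= v -> Cmod z < 1/2 -> attractor lam z.
Proof.
  intros Hlam Hv Huv Hz.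
  pose proof r2_ge_third.
  set (orbit n := Nat.iter n digit_step (coords z)).
  assert (Horbit : forall n, in_box (orbit n)).
  { induction n as [|n IH]; [apply coords_in_box|apply digit_step_in_box]; auto. }
  exists (fun n => nearest_digit (fst (orbit n))); split.
  { intros n; apply nearest_digit_values. }
  rewrite <- (of_coords_coords z) by lra.
  change (coords z) with (orbit O).
  apply (is_series_of_bounded_remainders _ _ (fun n => of_coords (orbit n)) (3/2 + 3/2 * Cmod lam)).
  - exact Hlam.
  - intros n; apply Cmod_of_coords_le, Horbit.
  - intros n; apply of_coords_digit_step; lra.
Qed.

End NearestDigitExpansion.

Lemma regionH_inequalities (u v : R) : regionH (u, v) ->
  0 < u /\ 0 < v /\ u ^ 2 + v ^ 2 < 1/2 /\ 2 * u + 1 <= 3 * (u ^ 2 + v ^ 2).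
Proof.
  intros [Hdisc [Hu [Hv Hout]]].
  assert (Hhalf : (1 / sqrt 2) ^ 2 = / 2).
  { pose proof Rlt_sqrt2_0; rewrite <- (sqrt_sqrt 2) at 2 by lra; field; lra. }
  unfold open_disc in Hdisc, Hout.
  rewrite Cmod_lt_iff_sqr, Hhalf in Hdisc
    by (apply Rlt_le, Rdiv_lt_0_compat; [lra | apply Rlt_sqrt2_0]).
  rewrite Cmod_lt_iff_sqr in Hout by lra.
  apply Rnot_lt_le in Hout; simpl in *.
  split; [|split; [|split]]; nra.
Qed.

Lemma regionH_sqr_norm_le_im (u v : R) : regionH (u, v) -> u ^ 2 + v ^ 2 <= v.
Proof.
  intros Hreg; destruct (regionH_inequalities u v Hreg) as (Hu & Hv & Hsmall & Hout).
  set (r2 := u ^ 2 + v ^ 2) in *.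
  assert (u * u <= ((3 * r2 - 1) / 2) * ((3 * r2 - 1) / 2)) by nra.
  assert (r2 * r2 <= v * v) by (unfold r2 in *; nra).
  nra.
Qed.

Theorem mainTheorem3 : forall lam : Cx, regionH lam ->
  forall z : Cx, open_disc (Complex.RtoC 0) (1/2) z -> attractor lam z.
Proof.
  intros [u v] Hreg z Hz.
  destruct (regionH_inequalities u v Hreg) as (Hu & Hv & Hsmall & Hout).
  pose proof (regionH_sqr_norm_le_im u v Hreg).
  apply attractor_of_nearest_digits; auto.
  - apply Cmod_lt_iff_sqr; simpl; lra.
  - nra.
  - unfold open_disc, Cx in *; replace (Cminus z (RtoC 0)) with z in Hz by ring; exact Hz.
Qed.
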